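(* Fix $-1\le\eta_1<\eta_2\le1$ and $\delta>0$. For all $x\ge2$ and $Z\ge2$, $$ \sum_{s\in S(-1,1;x)}T_Z(W(s))\ll_{\delta,\mathbb{K}} x^{1/2+\delta}\left(\log Z+\frac{x\log x}{Z}\right). $$ In particular, for $Z=x$ the sum is $\ll_{\delta,\mathbb{K}} x^{1/2+2\delta}$.
   Context: $\mathbb{K}=\mathbb{Q}(\sqrt d)$ is a real quadratic field of class number one, $\epsilon>1$ its fundamental unit, $\sigma_1,\sigma_2$ the identity and conjugate embeddings, $\mathcal{N}(a)=|N_{\mathbb{K}/\mathbb{Q}}(a)|$. $S(-1,1;x)=\{s\in\mathcal{O}_{\mathbb{K}}: \epsilon^{-1}|\sigma_2(s)|<|\sigma_1(s)|\le\epsilon|\sigma_2(s)|,\ \sigma_1(s)>0,\ \mathcal{N}(s)\le x\}$. For $s\ne0$, $W(s)=\log|\sigma_1(s)/\sigma_2(s)|/(2\log\epsilon)$ (so $W(s)\in(-1/2,1/2]$ on this set). $T_Z(W)=\min\{\log Z,\ 1/(Z\|W-\eta_1/2\|)+1/(Z\|W-\eta_2/2\|)\}$, where $\|X\|$ is the distance of $X$ to the nearest integer and the minimum equals $\log Z$ when a denominator vanishes. *)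

From HB Require Import structures.
From mathcomp Require Import all_boot all_order all_algebra.
From mathcomp Require Import all_classical all_reals all_analysis.
Set Implicit Arguments. Unset Strict Implicit. Unset Printing Implicit Defensive.
Import Order.TTheory GRing.Theory Num.Theory.
Local Open Scope classical_set_scope.
Local Open Scope ring_scope.

(** Real quadratic field K = Q(sqrt d), d > 1 squarefree.  The ring of integers
    O_K = Z[w] with w = (1+sqrt d)/2 if d = 1 mod 4 and w = sqrt d otherwise;
    an element a + b w of O_K is represented by the pair (a, b) : int * int. *)

Definition sqfree (d : nat) : Prop := forall p : nat, prime p -> ~~ (p * p %| d)%N.

Definition real_quadratic_disc (d : nat) : Prop := (1 < d)%N /\ sqfree d.

Definition OK := (int * int)%type.

(** product in O_K:  w^2 = w + (d-1)/4 if d = 1 mod 4,  w^2 = d otherwise *)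
Definition OKmul (d : nat) (s t : OK) : OK :=
  let: (a, b) := s in let: (c, e) := t in
  if (d %% 4 == 1)%N then
    (a * c + b * e * ((d - 1) %/ 4)%N%:Z, a * e + b * c + b * e)
  else (a * c + b * e * d%:Z, a * e + b * c).

Definition OKadd (s t : OK) : OK := (s.1 + t.1, s.2 + t.2).
Definition OKone : OK := (1, 0).
Definition OKzero : OK := (0, 0).

(** the two real embeddings sigma_1 (identity) and sigma_2 (conjugation) *)
Definition omega1 {R : realType} (d : nat) : R :=
  if (d %% 4 == 1)%N then (1 + Num.sqrt (d%:R)) / 2 else Num.sqrt (d%:R).
Definition omega2 {R : realType} (d : nat) : R :=
  if (d %% 4 == 1)%N then (1 - Num.sqrt (d%:R)) / 2 else - Num.sqrt (d%:R).

Definition sigma1 {R : realType} (d : nat) (s : OK) : R :=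
  s.1%:~R + s.2%:~R * omega1 d.
Definition sigma2 {R : realType} (d : nat) (s : OK) : R :=
  s.1%:~R + s.2%:~R * omega2 d.

Definition absNorm {R : realType} (d : nat) (s : OK) : R :=
  `|sigma1 d s * sigma2 d s|.

Definition is_ideal (d : nat) (I : set OK) : Prop :=
  I OKzero /\ (forall s t, I s -> I t -> I (OKadd s t)) /\
  (forall s, I s -> I ((- s.1), (- s.2))) /\
  (forall r s, I s -> I (OKmul d r s)).

Definition is_principal (d : nat) (I : set OK) : Prop :=
  exists g : OK, forall z, I z <-> exists r : OK, z = OKmul d g r.

Definition class_number_one (d : nat) : Prop :=
  forall I : set OK, is_ideal d I -> is_principal d I.

Definition is_unit (d : nat) (u : OK) : Prop := exists t : OK, OKmul d u t = OKone.

Definition is_fundamental_unit {R : realType} (d : nat) (e : OK) : Prop :=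
  is_unit d e /\ 1 < sigma1 (R := R) d e /\
  forall u, is_unit d u ->
    exists k : int, (sigma1 d u : R) = sigma1 d e ^ k \/ (sigma1 d u : R) = - (sigma1 d e ^ k).

Definition S_set {R : realType} (d : nat) (e : OK) (x : R) : set OK :=
  let eps : R := sigma1 d e in
  [set s | eps^-1 * `|(sigma2 d s : R)| < `|(sigma1 d s : R)| /\
           `|(sigma1 d s : R)| <= eps * `|(sigma2 d s : R)| /\
           0 < (sigma1 d s : R) /\ absNorm d s <= x].

Definition Wfun {R : realType} (d : nat) (e : OK) (s : OK) : R :=
  ln `|(sigma1 d s : R) / sigma2 d s| / (2 * ln (sigma1 d e : R)).

Definition distZ {R : realType} (X : R) : R :=
  Num.min (X - (Num.floor X)%:~R) ((Num.ceil X)%:~R - X).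

Definition TZ {R : realType} (eta1 eta2 Z W : R) : R :=
  let n1 := distZ (W - eta1 / 2) in
  let n2 := distZ (W - eta2 / 2) in
  if (n1 == 0) || (n2 == 0) then ln Z
  else Num.min (ln Z) ((Z * n1)^-1 + (Z * n2)^-1).

(* The values W(s), s in S(-1,1;x), are well spaced: if s and t are not
   proportional, s1(s) s2(t) - s1(t) s2(s) is a nonzero integer multiple of
   omega1 - omega2, so the ratios |s1/s2| differ by at least 1/(eps x) and
   |W(s) - W(t)| >> 1/x.  An element of S is determined by its line through 0
   and one coordinate, of size O(sqrt x).  Hence for any shift beta, cutting
   the range of |W(s) - beta| into buckets of width 1/N with N ~ x puts
   O(sqrt x) elements into each bucket, and the k-th bucket contributes at
   most min(log Z, N/(Z k)); summing over k gives sqrt x (log Z + x log x / Z).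
   Finally ||y|| = |y - n| for some n in {-1, 0, 1} when |y| <= 1, so T_Z(W)
   is bounded by six such shifted sums. *)

From mathcomp Require Import all_boot all_order all_algebra.
From mathcomp Require Import all_classical all_reals all_analysis.
From mathcomp Require Import ring lra zify.
Import Order.TTheory GRing.Theory Num.Theory.
Local Open Scope ring_scope.
Set Implicit Arguments. Unset Strict Implicit.

Lemma min_addr_le (R : realDomainType) (c a b : R) : 0 <= c -> 0 <= a -> 0 <= b ->
  Num.min c (a + b) <= Num.min c a + Num.min c b.
Proof.
move=> c0 a0 b0; rewrite ge_min.
case: (leP c a) => ha; case: (leP c b) => hb;
  rewrite ?(min_l ha) ?(min_l hb) ?(min_r (ltW ha)) ?(min_r (ltW hb)).
- by apply/orP; left; lra.
- by apply/orP; left; lra.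
- by apply/orP; left; lra.
- by rewrite lexx orbT.
Qed.

Definition TZ1 {R : realType} (Z t : R) : R :=
  if t == 0 then ln Z else Num.min (ln Z) (Z * t)^-1.

Section TZ1.
Variables (R : realType) (Z : R).
Hypothesis Z1 : 1 <= Z.

Lemma TZ1_ge0 (t : R) : 0 <= t -> 0 <= TZ1 Z t.
Proof.
move=> t0; have lZ := ln_ge0 Z1; rewrite /TZ1.
by case: ifP => // _; rewrite le_min lZ invr_ge0 mulr_ge0 // (le_trans _ Z1).
Qed.

Lemma TZ1_le_ln (t : R) : TZ1 Z t <= ln Z.
Proof. by rewrite /TZ1; case: ifP => // _; rewrite ge_min lexx. Qed.

Lemma distZ_ge0 (X : R) : 0 <= distZ X.
Proof. by rewrite /distZ le_min !subr_ge0 floor_le ceil_ge. Qed.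

Lemma TZ_le_TZ1 (eta1 eta2 W : R) :
  TZ eta1 eta2 Z W <= TZ1 Z (distZ (W - eta1 / 2)) + TZ1 Z (distZ (W - eta2 / 2)).
Proof.
rewrite /TZ; set n1 := distZ _; set n2 := distZ _.
have h1 : 0 <= TZ1 Z n1 by apply/TZ1_ge0/distZ_ge0.
have h2 : 0 <= TZ1 Z n2 by apply/TZ1_ge0/distZ_ge0.
have [->|n10] /= := eqVneq n1 0; first by rewrite /TZ1 eqxx lerDl.
have [->|n20] /= := eqVneq n2 0; first by rewrite /TZ1 eqxx lerDr.
have Zn0 (n : R) : 0 <= n -> 0 <= (Z * n)^-1.
  by move=> n0; rewrite invr_ge0 mulr_ge0 // (le_trans _ Z1).
rewrite /TZ1 (negPf n10) (negPf n20) min_addr_le ?ln_ge0 ?Zn0 //; exact: distZ_ge0.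
Qed.

Lemma distZ_unit_interval (y : R) : -1 <= y <= 1 ->
  exists2 n : int, (n == -1) || (n == 0) || (n == 1) & distZ y = `|y - n%:~R|.
Proof.
case/andP=> ym yM; rewrite /distZ.
have fl1 : -1 <= Num.floor y by rewrite floor_ge_int.
have fl2 : Num.floor y <= 1 by rewrite -(ler_int R) (le_trans (floor_le y)).
have ce1 : -1 <= Num.ceil y by rewrite -(ler_int R) (le_trans _ (ceil_ge y)).
have ce2 : Num.ceil y <= 1 by rewrite ceil_le_int.
case: leP => _.
  by exists (Num.floor y); [lia | rewrite ger0_norm // subr_ge0 floor_le].
by exists (Num.ceil y); [lia | rewrite ler0_norm ?opprB // subr_le0 ceil_ge].
Qed.

Lemma TZ1_distZ_le (W b : R) : -1 <= W - b <= 1 ->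
  TZ1 Z (distZ (W - b)) <=
  TZ1 Z `|W - (b - 1)| + TZ1 Z `|W - b| + TZ1 Z `|W - (b + 1)|.
Proof.
move=> /distZ_unit_interval[n n3 ->]; rewrite -addrA -opprD.
have g1 := TZ1_ge0 (normr_ge0 (W - (b - 1))).
have g2 := TZ1_ge0 (normr_ge0 (W - b)).
have g3 := TZ1_ge0 (normr_ge0 (W - (b + 1))).
by case/orP: n3 => [/orP[]|] /eqP->; rewrite ?intrN1 ?addr0; lra.
Qed.

End TZ1.

Lemma ln_norm_le (R : realType) (eps r : R) :
  1 < eps -> eps^-1 < r -> r <= eps -> `|ln r| <= ln eps.
Proof.
move=> e1 h1 h2; have ep : 0 < eps by apply: lt_trans e1.
have rp : 0 < r by apply: lt_trans h1; rewrite invr_gt0.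
rewrite ler_norml ler_ln ?posrE // h2 andbT -lnV ?posrE //.
by rewrite ler_ln ?posrE ?invr_gt0 // ltW.
Qed.

Lemma subr_div_le_ln (R : realType) (a b : R) : 0 < a -> 0 < b ->
  (a - b) / a <= ln a - ln b.
Proof.
move=> a0 b0; have ba : -1 < b / a - 1 by rewrite ltrBrDr addNr divr_gt0.
have := le_ln1Dx ba; rewrite addrC subrK ln_div ?posrE //.
have -> : (a - b) / a = - (b / a - 1) by field; rewrite gt_eqF.
move=> h; lra.
Qed.

Lemma dist_le_mul_dist_ln (R : realType) (eps a b : R) :
  0 < a -> a <= eps -> 0 < b -> b <= eps -> `|a - b| <= eps * `|ln a - ln b|.
Proof.
wlog ba : a b / b <= a.
  move=> H a0 ae b0 be; case: (leP b a) => ba; first exact: H.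
  by rewrite distrC (distrC (ln a)); apply: H => //; apply: ltW.
move=> a0 ae b0 be; have hl := subr_div_le_ln a0 b0.
have t0 : 0 <= (a - b) / a by rewrite divr_ge0 ?subr_ge0 // ltW.
rewrite !ger0_norm ?subr_ge0 //; last by rewrite -subr_ge0 (le_trans t0 hl).
have -> : a - b = a * ((a - b) / a) by field; rewrite gt_eqF.
exact: ler_pM (ltW a0) t0 ae hl.
Qed.

Lemma inv_le_dist_div (R : realType) (u v u' v' X : R) :
  0 < v -> 0 < v' -> 1 <= `|u * v' - u' * v| -> v * v' <= X ->
  X^-1 <= `|u / v - u' / v'|.
Proof.
move=> v0 v0' h1 hX; have vv : 0 < v * v' by rewrite mulr_gt0.
have -> : u / v - u' / v' = (u * v' - u' * v) / (v * v').
  by field; rewrite !gt_eqF.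
rewrite normf_div (gtr0_norm vv).
apply: (le_trans (y := (v * v')^-1)); first by rewrite lef_pV2 ?posrE ?(lt_le_trans vv).
by rewrite -[X in X <= _]mul1r ler_pM2r ?invr_gt0.
Qed.

Lemma truncn_norm_eq_dist_lt (R : realType) (N y y' : R) :
  0 < N -> (0 <= y) = (0 <= y') ->
  Num.truncn (N * `|y|) = Num.truncn (N * `|y'|) -> `|y - y'| < N^-1.
Proof.
move=> N0 sg E.
have /andP[h1 h2] := truncn_itv (mulr_ge0 (ltW N0) (normr_ge0 y)).
have /andP[h3 h4] := truncn_itv (mulr_ge0 (ltW N0) (normr_ge0 y')).
rewrite E -natr1 in h1 h2 h4.
have hab : `|N * `|y| - N * `|y'| | < 1.
  rewrite ltr_norml; apply/andP; split; lra.
have -> : `|y - y'| = `| `|y| - `|y'| |.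
  case: (leP 0 y) => hy.
    have hy' : 0 <= y' by rewrite -sg.
    by rewrite (ger0_norm hy) (ger0_norm hy').
  have hy' : y' < 0 by rewrite ltNge -sg -ltNge.
  by rewrite (ltr0_norm hy) (ltr0_norm hy') -opprD normrN addrC.
by rewrite -mulrBr normrM (gtr0_norm N0) -ltr_pdivlMl // mulr1 in hab.
Qed.

Lemma harmonic_le_ln (R : realType) (n : nat) :
  \sum_(k < n) ((k.+1)%:R : R)^-1 <= 1 + ln (n%:R : R).
Proof.
elim: n => [|[|n] IH]; first by rewrite big_ord0 ln0 // addr0.
  by rewrite big_ord1 invr1 ln1 addr0.
rewrite big_ord_recr /=; apply: le_trans (lerD IH (lexx _)) _.
have := @subr_div_le_ln R n.+2%:R n.+1%:R; rewrite !ltr0n => /(_ isT isT).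
have -> : (n.+2%:R - n.+1%:R) / n.+2%:R = (n.+2%:R : R)^-1.
  by rewrite -natrB // subSnn div1r.
by rewrite -addrA lerD2l addrC -lerBrDr.
Qed.

Lemma add1_ln_mul_le (R : realType) (c x : R) : 1 <= c -> 2 <= x ->
  1 + ln (c * x) <= ((1 + ln c) / ln 2 + 1) * ln x.
Proof.
move=> c1 x2; have l2 : 0 < ln (2 : R) by apply: ln_gt0; lra.
have lx : ln 2 <= ln x by rewrite ler_ln ?posrE //; lra.
have lc := ln_ge0 c1.
rewrite lnM ?posrE; try lra.
have h : 1 + ln c <= (1 + ln c) / ln 2 * ln x.
  by rewrite mulrAC ler_pdivlMr // ler_wpM2l //; lra.
by rewrite mulrDl mul1r; lra.
Qed.

Lemma sqrt_le_powR (R : realType) (x delta : R) : 1 <= x -> 0 <= delta ->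
  Num.sqrt x <= x `^ (2^-1 + delta).
Proof.
move=> x1 d0; rewrite -powR12_sqrt; last lra.
by apply: ler_powR => //; lra.
Qed.

Lemma truncn_sqrt_le (R : realType) (eps x : R) : 0 <= eps -> 1 <= x ->
  ((Num.truncn (2 * Num.sqrt (eps * x))).+1%:R : R) <= (2 * Num.sqrt eps + 1) * Num.sqrt x.
Proof.
move=> e0 x1; have sx : 1 <= Num.sqrt x by rewrite -sqrtr1 ler_sqrt //; lra.
have se := sqrtr_ge0 eps.
have ht : ((Num.truncn (2 * Num.sqrt (eps * x)))%:R : R) <= 2 * Num.sqrt eps * Num.sqrt x.
  by rewrite -mulrA -sqrtrM // truncn_le mulr_ge0 ?sqrtr_ge0.
by rewrite -natr1; lra.
Qed.

Lemma ln_le_powR_div (R : realType) (x delta : R) : 0 < x -> 0 < delta ->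
  ln x <= x `^ delta / delta.
Proof.
move=> x0 d0; rewrite ler_pdivlMr // mulrC -ln_powR.
exact/ltW/ln_sublinear/powR_gt0.
Qed.

Lemma powR_lnD_le (R : realType) (x delta : R) : 0 < x -> 0 < delta ->
  x `^ (2^-1 + delta) * (ln x + x * ln x / x) <= 2 / delta * x `^ (2^-1 + 2 * delta).
Proof.
move=> x0 d0; have -> : ln x + x * ln x / x = 2 * ln x by field; rewrite gt_eqF.
have -> : x `^ (2^-1 + 2 * delta) = x `^ (2^-1 + delta) * x `^ delta.
  by rewrite -powRD ?(lt0r_neq0 x0) ?implybT //; congr (_ `^ _); ring.
rewrite [X in _ <= X]mulrCA ler_pM2l ?powR_gt0 // -mulrA ler_pM2l //.
by rewrite mulrC ln_le_powR_div.
Qed.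

Lemma sum_le_sum_inj (R : realType) (T : eqType) (K : finType) (r : seq T)
    (key : T -> K) (f : T -> R) (g : K -> R) :
  uniq r -> {in r &, injective key} -> {in r, forall s, f s <= g (key s)} ->
  (forall k, 0 <= g k) -> \sum_(s <- r) f s <= \sum_k g k.
Proof.
move=> ur inj hf hg.
apply: (le_trans (y := \sum_(s <- r) g (key s))).
  by rewrite big_seq [X in _ <= X]big_seq; apply: ler_sum.
rewrite -(big_map key xpredT g) big_uniq ?map_inj_in_uniq //.
by rewrite [X in _ <= X](bigID (mem (map key r))) /= lerDl sumr_ge0.
Qed.

Lemma sum_prod_fst (V : nmodType) (K : nat) (T : finType) (phi : nat -> V) :
  \sum_(y : 'I_K * T) phi y.1 = (\sum_(k < K) phi k) *+ #|T|.
Proof.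
rewrite -(pair_bigA _ (fun i _ => phi (val i))) /= -sumrMnl.
by apply: eq_bigr => i _; rewrite big_const iter_addr_0.
Qed.

Lemma finite_support_sub (T : choiceType) (R : Type) (idx : R) (D : set T) (F : T -> R)
  (s : T) : s \in finite_support idx D F -> D s.
Proof. by case: finite_supportP => // X XD _ _ /XD. Qed.

(* A bound for [TZ1 Z t] on the bucket [k / N <= t < (k + 1) / N]. *)
Definition bucket_weight {R : realType} (Z N : R) (k : nat) : R :=
  if k == 0%N then ln Z else N / (Z * k%:R).

Lemma bucket_weight_ge0 (R : realType) (Z N : R) (k : nat) : 1 <= Z -> 0 <= N ->
  0 <= bucket_weight Z N k.
Proof.
move=> Z1 N0; rewrite /bucket_weight; case: ifP => _; first exact: ln_ge0.
by rewrite divr_ge0 // mulr_ge0 // (le_trans _ Z1).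
Qed.

Lemma TZ1_le_bucket_weight (R : realType) (Z N t : R) : 1 <= Z -> 0 < N -> 0 <= t ->
  TZ1 Z t <= bucket_weight Z N (Num.truncn (N * t)).
Proof.
move=> Z1 N0 t0; rewrite /bucket_weight; case: eqP => [_|/eqP m0].
  exact: TZ1_le_ln.
have := truncn_le (N * t); rewrite mulr_ge0 ?(ltW N0) //.
move: m0; set m := Num.truncn (N * t) => m0 hm.
have mp : 0 < (m%:R : R) by rewrite ltr0n lt0n.
have Zp : 0 < Z by apply: lt_le_trans Z1.
have tp : 0 < t by nra.
rewrite /TZ1 gt_eqF // ge_min -invf_div lef_pV2 ?posrE ?divr_gt0 ?mulr_gt0 //.
by rewrite -mulrA ler_pM2l // ler_pdivrMr // [t * _]mulrC hm orbT.
Qed.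

Lemma sum_bucket_weight_le (R : realType) (Z N : R) : 1 <= N -> 1 <= Z ->
  \sum_(k < (Num.truncn (2 * N)).+1) bucket_weight Z N k
    <= ln Z + N / Z * (1 + ln (2 * N)).
Proof.
move=> N1 Z1; have Zp : 0 < Z by lra.
rewrite big_ord_recl lerD2l.
have -> : \sum_(i < Num.truncn (2 * N)) bucket_weight Z N (bump 0 i)
    = N / Z * \sum_(i < Num.truncn (2 * N)) ((i.+1)%:R : R)^-1.
  rewrite mulr_sumr; apply: eq_bigr => i _.
  by rewrite /bucket_weight /bump add1n invfM mulrA.
rewrite ler_pM2l ?divr_gt0 //; try lra.
apply: le_trans (harmonic_le_ln _ _) _; rewrite lerD2l.
have hK : ((Num.truncn (2 * N))%:R : R) <= 2 * N by rewrite truncn_le mulr_ge0 //; lra.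
by rewrite ler_ln ?posrE ?ltr0n ?truncn_gt0 //; lra.
Qed.

Lemma sum_bucket_weight_le_ln (R : realType) (M x Z : R) : 1 <= M -> 2 <= x -> 1 <= Z ->
  \sum_(k < (Num.truncn (2 * (M * x))).+1) bucket_weight Z (M * x) k
    <= (1 + M * ((1 + ln (2 * M)) / ln 2 + 1)) * (ln Z + x * ln x / Z).
Proof.
move=> M1 x2 Z1; set A := (1 + ln (2 * M)) / ln 2 + 1.
have Zp : 0 < Z by lra.
have lZ := ln_ge0 Z1; have lx : 0 <= ln x by apply: ln_ge0; lra.
have A0 : 0 <= A.
  have l2 : 0 < ln (2 : R) by apply: ln_gt0; lra.
  by rewrite addr_ge0 // divr_ge0 ?(ltW l2) // addr_ge0 // ln_ge0 //; lra.
have Mx : 1 <= M * x by rewrite mulr_ege1 //; lra.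
apply: le_trans (sum_bucket_weight_le Mx Z1) _.
have hL : 1 + ln (2 * (M * x)) <= A * ln x by rewrite mulrA add1_ln_mul_le //; lra.
have xZ : 0 <= x * ln x / Z by rewrite divr_ge0 ?mulr_ge0 //; lra.
apply: (le_trans (y := ln Z + M * A * (x * ln x / Z))).
  rewrite lerD2l (le_trans (ler_wpM2l _ hL)) ?divr_ge0 ?mulr_ge0 //; try lra.
have MA : 0 <= M * A by rewrite mulr_ge0 //; lra.
by rewrite mulrDl mul1r (mulrDr (M * A)); have := mulr_ge0 MA lZ; lra.
Qed.

(* Non-proportional elements of S(-1,1;x) have W-values more than
   [(sep_const eps * x)^-1] apart, see [Wfun_sep]. *)
Definition sep_const {R : realType} (eps : R) : R := 2 * ln eps * eps ^+ 2 + 1.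

(* The factor 8 counts the signs of [W - beta], of [ok_key] and of [sigma2]. *)
Definition sum_const {R : realType} (eps : R) : R :=
  8 * (2 * Num.sqrt eps + 1) * (1 + sep_const eps * ((1 + ln (2 * sep_const eps)) / ln 2 + 1)).

Lemma sep_const_ge1 (R : realType) (eps : R) : 1 < eps -> 1 <= sep_const eps.
Proof.
move=> e1; have := ln_ge0 (ltW e1); have := sqr_ge0 eps.
rewrite /sep_const; nra.
Qed.

Lemma sum_const_gt0 (R : realType) (eps : R) : 1 < eps -> 0 < sum_const eps.
Proof.
move=> e1; have M1 := sep_const_ge1 e1.
have l2 : 0 < ln (2 : R) by apply: ln_gt0; lra.
have A0 : 0 <= (1 + ln (2 * sep_const eps)) / ln 2 + 1.
  by rewrite addr_ge0 // divr_ge0 ?(ltW l2) // addr_ge0 // ln_ge0 //; lra.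
have h1 : 0 < 2 * Num.sqrt eps + 1 by have := sqrtr_ge0 eps; lra.
have h2 : 0 < 1 + sep_const eps * ((1 + ln (2 * sep_const eps)) / ln 2 + 1).
  by have := mulr_ge0 (le_trans ler01 M1) A0; lra.
by rewrite /sum_const !mulr_gt0.
Qed.

(* Tells apart the nonzero elements of a line through 0 in O_K. *)
Definition ok_key (s : OK) : int := if s.2 == 0 then s.1 else s.2.

Lemma ok_key_inj (s t : OK) : s != (0, 0) -> t != (0, 0) ->
  s.1 * t.2 - t.1 * s.2 = 0 -> ok_key s = ok_key t -> s = t.
Proof.
case: s t => [a b] [a' b']; rewrite /ok_key /= !xpair_eqE => ns nt h.
case: (eqVneq b 0) => [b0|b0]; case: (eqVneq b' 0) => [b'0|b'0];
  rewrite ?b0 ?b'0 ?eqxx ?(negPf b0) ?(negPf b'0) => E; congr pair; nia.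
Qed.

Section QuadraticField.
Variables (R : realType) (d : nat) (e : OK).
Hypotheses (d_gt0 : (0 < d)%N) (eps_gt1 : 1 < (sigma1 d e : R)).
Local Notation eps := (sigma1 d e : R).
Local Notation s1 := (sigma1 (R := R) d).
Local Notation s2 := (sigma2 (R := R) d).

Let eps_gt0 : 0 < eps. Proof. exact: lt_trans eps_gt1. Qed.
Let ln_eps_gt0 : 0 < ln eps. Proof. exact: ln_gt0. Qed.

Lemma omega_sub_ge1 : 1 <= (omega1 d : R) - omega2 d.
Proof.
have sd : 1 <= Num.sqrt (d%:R : R).
  by rewrite -[X in X <= _]sqrtr1 ler_sqrt ?ler1n.
by rewrite /omega1 /omega2; case: ifP => _; lra.
Qed.

Lemma sigma1_sub_sigma2 (s : OK) : s1 s - s2 s = s.2%:~R * (omega1 d - omega2 d).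
Proof. by rewrite /sigma1 /sigma2; ring. Qed.

Lemma sigma_cross (s t : OK) :
  s1 s * s2 t - s1 t * s2 s = - ((s.1 * t.2 - t.1 * s.2)%:~R * (omega1 d - omega2 d)).
Proof. by rewrite /sigma1 /sigma2 intrB !intrM; ring. Qed.

Lemma sigma_cross_ge1 (s t : OK) : s.1 * t.2 - t.1 * s.2 != 0 ->
  1 <= `|s1 s * s2 t - s1 t * s2 s|.
Proof.
move=> k0; rewrite sigma_cross normrN normrM -intr_norm.
have hk : 1 <= (`|s.1 * t.2 - t.1 * s.2|%:~R : R) by rewrite ler1z; lia.
have ho := omega_sub_ge1; rewrite (ger0_norm (le_trans ler01 ho)).
nra.
Qed.

Section Elements.
Variables (x : R) (s : OK).
Hypothesis sS : S_set d e x s.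

Lemma S_set_sigma_gt0 : 0 < s1 s /\ 0 < `|s2 s|.
Proof.
case: sS => _ [h2 [h3 _]]; split => //.
rewrite (gtr0_norm h3) in h2.
by rewrite -(pmulr_rgt0 _ eps_gt0) (lt_le_trans h3 h2).
Qed.

Lemma S_set_sqr_le : `|s1 s| ^+ 2 <= eps * x /\ `|s2 s| ^+ 2 <= eps * x.
Proof.
have [u0 v0] := S_set_sigma_gt0.
case: sS => h1 [h2 [_ h4]]; rewrite /absNorm normrM in h4.
rewrite ltr_pdivrMl // in h1.
have u0' : 0 < `|s1 s| by rewrite gtr0_norm.
split; nra.
Qed.

Lemma S_set_ratio : eps^-1 < `|s1 s| / `|s2 s| <= eps.
Proof.
have [_ v0] := S_set_sigma_gt0.
case: sS => h1 [h2 _].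
by rewrite ltr_pdivlMr // ler_pdivrMr // h1 h2.
Qed.

Lemma Wfun_norm_le : `|(Wfun d e s : R)| <= 2^-1.
Proof.
have /andP[r1 r2] := S_set_ratio.
have hl := ln_norm_le eps_gt1 r1 r2.
rewrite /Wfun normf_div normf_div (gtr0_norm (mulr_gt0 _ ln_eps_gt0)) //.
by rewrite ler_pdivrMr ?mulr_gt0 //; lra.
Qed.

Lemma S_set_x_gt0 : 0 < x.
Proof.
have [u0 _] := S_set_sigma_gt0; have [ux _] := S_set_sqr_le.
by rewrite -(pmulr_rgt0 _ eps_gt0) (lt_le_trans _ ux) ?exprn_gt0 ?normr_gt0 ?gt_eqF.
Qed.

Lemma S_set_neq0 : s != (0, 0).
Proof.
by apply: contraTneq (proj1 S_set_sigma_gt0) => ->; rewrite /sigma1 /= mul0r addr0 ltxx.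
Qed.

Lemma ok_key_norm_le : `|(ok_key s)%:~R| <= 2 * Num.sqrt (eps * x).
Proof.
have [u0 _] := S_set_sigma_gt0; have [ux vx] := S_set_sqr_le.
have ex : 0 <= eps * x := le_trans (sqr_ge0 _) ux.
have su : `|s1 s| <= Num.sqrt (eps * x).
  by rewrite -[X in X <= _]normr_id -sqrtr_sqr ler_sqrt.
have sv : `|s2 s| <= Num.sqrt (eps * x).
  by rewrite -[X in X <= _]normr_id -sqrtr_sqr ler_sqrt.
have sq0 := sqrtr_ge0 (eps * x).
rewrite /ok_key; case: eqP => [b0|/eqP b0].
  by move: su; rewrite /sigma1 b0 mul0r addr0 => su; lra.
have hd := omega_sub_ge1.
have : `|(s.2%:~R : R)| <= `|s1 s - s2 s|.
  rewrite sigma1_sub_sigma2 normrM -[X in X <= _]mulr1 ler_wpM2l //.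
  by rewrite ger0_norm // (le_trans _ hd).
move=> h; apply: (le_trans h); apply: (le_trans (ler_normB _ _)); lra.
Qed.

End Elements.

Lemma Wfun_sep (x : R) (s t : OK) : S_set d e x s -> S_set d e x t ->
  (0 < s2 s) = (0 < s2 t) -> s.1 * t.2 - t.1 * s.2 != 0 ->
  (x * (2 * ln eps * eps ^+ 2))^-1 <= `|(Wfun d e s : R) - Wfun d e t|.
Proof.
move=> sS tS sg k0.
have [u0 v0] := S_set_sigma_gt0 sS; have [u0' v0'] := S_set_sigma_gt0 tS.
have [_ vx] := S_set_sqr_le sS; have [_ vx'] := S_set_sqr_le tS.
have x0 := S_set_x_gt0 sS.
have /andP[_ r] := S_set_ratio sS; have /andP[_ r'] := S_set_ratio tS.
have cross : 1 <= `| `|s1 s| * `|s2 t| - `|s1 t| * `|s2 s| |.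
  rewrite (gtr0_norm u0) (gtr0_norm u0'); apply: le_trans (sigma_cross_ge1 k0) _.
  case: (ltP 0 (s2 s)) => hs.
    by rewrite (gtr0_norm hs) (gtr0_norm (_ : 0 < s2 t)) // -sg.
  rewrite (ler0_norm hs) (ler0_norm (_ : s2 t <= 0)) ?leNgt -?sg -?leNgt //.
  by rewrite -normrN opprB !mulrN opprK addrC.
have vv : `|s2 s| * `|s2 t| <= eps * x by nra.
have hr := inv_le_dist_div v0 v0' cross vv.
have rho0 (w : OK) : 0 < s1 w -> 0 < `|s2 w| -> 0 < `|s1 w| / `|s2 w|.
  by move=> a b; rewrite divr_gt0 // gtr0_norm.
have hl := dist_le_mul_dist_ln (rho0 _ u0 v0) r (rho0 _ u0' v0') r'.
set D := `|ln _ - ln _| in hl.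
have hD : (eps ^+ 2 * x)^-1 <= D.
  rewrite -(ler_pM2l eps_gt0); apply: le_trans (le_trans hr hl).
  by rewrite expr2 -mulrA invfM mulrA divff ?gt_eqF // mul1r.
rewrite /Wfun !normf_div -mulrBl normrM normfV -/D.
rewrite (gtr0_norm (mulr_gt0 _ ln_eps_gt0)) //.
have -> : (x * (2 * ln eps * eps ^+ 2))^-1 = (eps ^+ 2 * x)^-1 / (2 * ln eps).
  by field; rewrite ?gt_eqF.
by rewrite ler_pM2r // invr_gt0 mulr_gt0.
Qed.

Lemma S_set_eq_of_bucket (x beta : R) (s t : OK) : S_set d e x s -> S_set d e x t ->
  Num.truncn (sep_const eps * x * `|Wfun d e s - beta|)
    = Num.truncn (sep_const eps * x * `|Wfun d e t - beta|) ->
  (0 <= Wfun d e s - beta) = (0 <= Wfun d e t - beta) ->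
  (0 < s2 s) = (0 < s2 t) -> ok_key s = ok_key t -> s = t.
Proof.
move=> sS tS Ek Ew Es Ekey.
have x0 := S_set_x_gt0 sS.
have c0 : 0 < 2 * ln eps * eps ^+ 2 by rewrite !mulr_gt0 ?exprn_gt0.
apply: ok_key_inj (S_set_neq0 sS) (S_set_neq0 tS) _ Ekey.
apply/eqP; apply: contraTT isT => k0.
have N0 : 0 < (2 * ln eps * eps ^+ 2 + 1) * x by rewrite mulr_gt0 // addr_gt0.
have close := truncn_norm_eq_dist_lt N0 Ew Ek.
rewrite opprB addrA subrK in close.
have := le_lt_trans (Wfun_sep sS tS Es k0) close.
by rewrite ltf_pV2 ?posrE ?(mulr_gt0 x0 c0) // mulrDl mul1r [x * _]mulrC gtrDl ltNge ltW.
Qed.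

Lemma sum_TZ1_dist_le (x Z beta : R) (r : seq OK) :
  1 <= x -> 1 <= Z -> `|beta| <= 3 / 2 -> uniq r -> (forall s, s \in r -> S_set d e x s) ->
  \sum_(s <- r) TZ1 Z `|Wfun d e s - beta|
    <= (\sum_(k < (Num.truncn (2 * (sep_const eps * x))).+1)
          bucket_weight Z (sep_const eps * x) k)
       *+ ((Num.truncn (2 * Num.sqrt (eps * x))).+1 * 8).
Proof.
move=> x1 Z1 hb ur rS.
set N := sep_const eps * x; set K := Num.truncn (2 * N).
set J := Num.truncn (2 * Num.sqrt (eps * x)).
have N0 : 0 < N by rewrite mulr_gt0 ?addr_gt0 ?mulr_gt0 ?exprn_gt0 //; lra.
have hk s : s \in r -> (Num.truncn (N * `|Wfun d e s - beta|)%R < K.+1)%N.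
  move=> /rS sS; rewrite ltnS le_truncn // mulrC ler_pM2r //.
  by apply: le_trans (ler_normB _ _) _; have := Wfun_norm_le sS; lra.
have hj s : s \in r -> (`|ok_key s|%N < J.+1)%N.
  move=> /rS sS; rewrite ltnS truncn_ge_nat ?mulr_ge0 ?sqrtr_ge0 //.
  by rewrite natr_absz intr_norm ok_key_norm_le.
(* Two elements with the same key are proportional by [Wfun_sep] and then
   equal by [ok_key_inj]. *)
pose key s := ((inord (Num.truncn (N * `|Wfun d e s - beta|)) : 'I_K.+1),
  ((inord `|ok_key s|%N : 'I_J.+1), 0 <= Wfun d e s - beta, 0 <= ok_key s, 0 < s2 s)).
have -> : (J.+1 * 8)%N = #|{: 'I_J.+1 * bool * bool * bool}|.
  by rewrite !card_prod card_ord card_bool -!mulnA.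
rewrite -sum_prod_fst; apply: (sum_le_sum_inj (key := key)) => //.
- move=> s t sr tr [/(congr1 val)] + /(congr1 val) + Ew Ekey Es.
  rewrite /= !inordK ?hk ?hj // => Ek Eabs.
  apply: S_set_eq_of_bucket (rS _ sr) (rS _ tr) Ek Ew Es _.
  move: Ekey Eabs; case: (ok_key s) => ?; case: (ok_key t) => ? //=; lia.
- by move=> s sr; rewrite /= inordK ?hk //; apply: TZ1_le_bucket_weight Z1 N0 (normr_ge0 _).
- by move=> k; apply: bucket_weight_ge0 Z1 (ltW N0).
Qed.

Lemma sum_TZ1_dist_le_powR (x Z beta delta : R) (r : seq OK) :
  0 <= delta -> 2 <= x -> 2 <= Z -> `|beta| <= 3 / 2 ->
  uniq r -> (forall s, s \in r -> S_set d e x s) ->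
  \sum_(s <- r) TZ1 Z `|Wfun d e s - beta|
    <= sum_const eps * x `^ (2^-1 + delta) * (ln Z + x * ln x / Z).
Proof.
move=> dl x2 Z2 hb ur rS.
apply: le_trans (sum_TZ1_dist_le _ _ hb ur rS) _; try lra.
have x1 : 1 <= x by lra.
have Z1 : 1 <= Z by lra.
have hW := sum_bucket_weight_le_ln (sep_const_ge1 eps_gt1) x2 Z1.
have hJ := truncn_sqrt_le (ltW eps_gt0) x1.
have hp := sqrt_le_powR x1 dl.
set J := Num.truncn (2 * Num.sqrt _) in hJ *.
rewrite -(mulr_natr _ (J.+1 * 8)) natrM.
set B := 1 + _ * _ in hW; set Q := ln Z + _ in hW *.
have c0 : 0 <= 2 * Num.sqrt eps + 1 by have := sqrtr_ge0 eps; lra.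
apply: (le_trans (y := B * Q * ((2 * Num.sqrt eps + 1) * x `^ (2^-1 + delta) * 8))).
  apply: ler_pM hW _; last by rewrite ler_pM2r // (le_trans hJ) // ler_wpM2l.
  - have M0 := le_trans ler01 (sep_const_ge1 eps_gt1).
    by apply: sumr_ge0 => k _; apply: bucket_weight_ge0; rewrite ?mulr_ge0 //; lra.
  - by rewrite mulr_ge0.
by rewrite le_eqVlt; apply/orP; left; apply/eqP; rewrite /B /Q /sum_const; ring.
Qed.

Lemma sum_TZ1_distZ_le (x Z eta delta : R) (r : seq OK) :
  0 <= delta -> 2 <= x -> 2 <= Z -> -1 <= eta <= 1 ->
  uniq r -> (forall s, s \in r -> S_set d e x s) ->
  \sum_(s <- r) TZ1 Z (distZ (Wfun d e s - eta / 2))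
    <= 3 * (sum_const eps * x `^ (2^-1 + delta) * (ln Z + x * ln x / Z)).
Proof.
move=> dl x2 Z2 /andP[eta_ge eta_le] ur rS.
have hsum (c : R) : -1 <= c <= 1 -> \sum_(s <- r) TZ1 Z `|Wfun d e s - (eta / 2 + c)|
    <= sum_const eps * x `^ (2^-1 + delta) * (ln Z + x * ln x / Z).
  move=> /andP[c_ge c_le]; apply: sum_TZ1_dist_le_powR => //.
  by rewrite ler_norml; apply/andP; split; lra.
apply: le_trans (_ : _ <= \sum_(s <- r) (TZ1 Z `|Wfun d e s - (eta / 2 - 1)|
    + TZ1 Z `|Wfun d e s - eta / 2| + TZ1 Z `|Wfun d e s - (eta / 2 + 1)|)) _.
  rewrite big_seq [X in _ <= X]big_seq; apply: ler_sum => s /rS sS.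
  apply: TZ1_distZ_le; first lra.
  by have := Wfun_norm_le sS; rewrite ler_norml => /andP[]; lra.
rewrite !big_split /=.
have := hsum (-1); have := hsum 0; have := hsum 1; rewrite addr0.
have c1 : -1 <= (1 : R) <= 1 by apply/andP; split; lra.
have c0 : -1 <= (0 : R) <= 1 by apply/andP; split; lra.
have cN : -1 <= (-1 : R) <= 1 by apply/andP; split; lra.
move=> /(_ c1) h1 /(_ c0) h0 /(_ cN) hN; lra.
Qed.

Lemma sum_TZ_le (eta1 eta2 x Z delta : R) (r : seq OK) :
  0 <= delta -> -1 <= eta1 <= 1 -> -1 <= eta2 <= 1 -> 2 <= x -> 2 <= Z ->
  uniq r -> (forall s, s \in r -> S_set d e x s) ->
  \sum_(s <- r) TZ eta1 eta2 Z (Wfun d e s)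
    <= 6 * (sum_const eps * x `^ (2^-1 + delta) * (ln Z + x * ln x / Z)).
Proof.
move=> dl eta1_bd eta2_bd x2 Z2 ur rS.
apply: le_trans (_ : _ <= \sum_(s <- r) (TZ1 Z (distZ (Wfun d e s - eta1 / 2))
    + TZ1 Z (distZ (Wfun d e s - eta2 / 2)))) _.
  by apply: ler_sum => s _; apply: TZ_le_TZ1; lra.
rewrite big_split /=.
have := sum_TZ1_distZ_le dl x2 Z2 eta1_bd ur rS.
have := sum_TZ1_distZ_le dl x2 Z2 eta2_bd ur rS.
lra.
Qed.

End QuadraticField.

Theorem mainTheorem5 (R : realType) (d : nat) (e : OK) (delta : R) :
  real_quadratic_disc d -> class_number_one d -> is_fundamental_unit (R := R) d e ->
  0 < delta ->
  (exists C : R, 0 < C /\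
     forall eta1 eta2 x Z : R, -1 <= eta1 -> eta1 < eta2 -> eta2 <= 1 ->
       2 <= x -> 2 <= Z ->
       \sum_(s \in S_set d e x) TZ eta1 eta2 Z (Wfun d e s)
         <= C * x `^ (2^-1 + delta) * (ln Z + x * ln x / Z)) /\
  (exists C : R, 0 < C /\
     forall eta1 eta2 x : R, -1 <= eta1 -> eta1 < eta2 -> eta2 <= 1 ->
       2 <= x ->
       \sum_(s \in S_set d e x) TZ eta1 eta2 x (Wfun d e s)
         <= C * x `^ (2^-1 + 2 * delta)).
Proof.
move=> [d_gt1 _] _ [_ [eps_gt1 _]] delta_gt0.
have d_gt0 : (0 < d)%N by apply: ltnW.
have C_gt0 := sum_const_gt0 eps_gt1.
have fsum_le (eta1 eta2 x Z : R) : -1 <= eta1 -> eta1 < eta2 -> eta2 <= 1 -> 2 <= x -> 2 <= Z ->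
    \sum_(s \in S_set d e x) TZ eta1 eta2 Z (Wfun d e s)
      <= 6 * (sum_const (sigma1 d e) * x `^ (2^-1 + delta) * (ln Z + x * ln x / Z)).
  move=> h1 h12 h2 x2 Z2.
  apply: (sum_TZ_le d_gt0 eps_gt1
    (r := finite_support 0 (S_set d e x) (fun s => TZ eta1 eta2 Z (Wfun d e s))))
    (ltW delta_gt0) _ _ x2 Z2 (finite_support_uniq _ _ _) _.
  - by apply/andP; split; lra.
  - by apply/andP; split; lra.
  - exact: finite_support_sub.
split.
  exists (6 * sum_const (sigma1 d e)); split; first by rewrite mulr_gt0.
  move=> eta1 eta2 x Z h1 h12 h2 x2 Z2.
  by apply: le_trans (fsum_le _ _ _ _ h1 h12 h2 x2 Z2) _; rewrite !mulrA.
exists (6 * sum_const (sigma1 d e) * (2 / delta)); split.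
  by apply: mulr_gt0; [apply: mulr_gt0 | apply: divr_gt0]; rewrite ?ltr0n.
move=> eta1 eta2 x h1 h12 h2 x2; apply: le_trans (fsum_le _ _ _ _ h1 h12 h2 x2 x2) _.
set K := sum_const _; set p := x `^ _; set P := x `^ _.
have -> : 6 * (K * p * (ln x + x * ln x / x)) = 6 * K * (p * (ln x + x * ln x / x)).
  by rewrite !mulrA.
have K6 : 0 < 6 * K by rewrite mulr_gt0 ?ltr0n.
rewrite -[X in _ <= X]mulrA ler_pM2l //.
by apply: powR_lnD_le delta_gt0; lra.
Qed.
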